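(* Let $\alpha,\beta>0$, $a=1/\alpha$, $b=1/\beta$, $n\ge3$ and $1\le k\le n-2$. Let $S\in\overline{\mathcal{S}}_n$ be such that box $(n-k-1,k)$ is non-empty, and such that box $(n-k-1,k+1)$ or box $(n-k,k)$ is non-empty. Then $\mathbb{P}_{n,\alpha,\beta}(S)=O\!\left(\frac{1}{(n+a+b)^2}\right)$.
   Context: A staircase tableau of size $n$ has boxes $(i,j)$ with $i,j\ge1$ and $i+j\le n+1$, rows numbered from the top and columns from the left. An $\alpha/\beta$-staircase tableau of size $n$ is a filling in which each box is empty or contains $\alpha$ or $\beta$, such that: all boxes in the same column and above an $\alpha$ are empty; all boxes in the same row and to the left of a $\beta$ are empty; every main-diagonal box (with $i+j=n+1$) contains a symbol. $\overline{\mathcal{S}}_n$ is the set of these. The weight is $wt(S)=\alpha^{N_\alpha}\beta^{N_\beta}$ ($N_\alpha,N_\beta$ the numbers of $\alpha$'s, $\beta$'s), and $\mathbb{P}_{n,\alpha,\beta}(S)=wt(S)/\sum_{T\in\overline{\mathcal{S}}_n}wt(T)$. The boxes $(n-j-1,j)$, $1\le j\le n-2$, form the third main diagonal. *)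

From HB Require Import structures.
From mathcomp Require Import all_boot all_order all_algebra.
From mathcomp Require Import reals.
Set Implicit Arguments. Unset Strict Implicit. Unset Printing Implicit Defensive.
Import Order.TTheory GRing.Theory Num.Theory.

(* A filling of the n x n square grid; entry p = (i', j') (0-indexed) stands
   for the box (i'+1, j'+1) (1-indexed, row i'+1 from the top, column j'+1
   from the left).  None = empty box, Some true = alpha, Some false = beta. *)
Definition filling (n : nat) := {ffun 'I_n * 'I_n -> option bool}.

Definition is_tableau (n : nat) (S : filling n) : bool :=
  [forall p : 'I_n * 'I_n,
    [&& (n.+1 < p.1.+1 + p.2.+1)%N ==> (S p == None),
        (S p == Some true) ==>
          [forall i' : 'I_n, (i' < p.1)%N ==> (S (i', p.2) == None)],
        (S p == Some false) ==>
          [forall j' : 'I_n, (j' < p.2)%N ==> (S (p.1, j') == None)] &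
        (p.1.+1 + p.2.+1 == n.+1)%N ==> (S p != None)]].

Definition cell (n : nat) (S : filling n) (i j : nat) : option bool :=
  if (0 < i)%N && (0 < j)%N then
    match @insub _ (fun x => (x < n)%N) 'I_n i.-1,
          @insub _ (fun x => (x < n)%N) 'I_n j.-1 with
    | Some x, Some y => S (x, y)
    | _, _ => None
    end
  else None.

Local Open Scope ring_scope.

Definition wt (R : realType) (alpha beta : R) (n : nat) (S : filling n) : R :=
  alpha ^+ #|[set p | S p == Some true]| * beta ^+ #|[set p | S p == Some false]|.

Definition prob (R : realType) (alpha beta : R) (n : nat) (S : filling n) : R :=
  wt alpha beta S / \sum_(T : filling n | is_tableau T) wt alpha beta T.

From HB Require Import structures.
From mathcomp Require Import all_boot all_order all_algebra.
From mathcomp Require Import reals zify ring lra.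
Set Implicit Arguments. Unset Strict Implicit. Unset Printing Implicit Defensive.
Import Order.TTheory GRing.Theory Num.Theory.

(* Cut a tableau into hooks, hook p being its p-th row together with the
   column that ends at the p-th diagonal box.  When the third-diagonal box
   (n-k-1, k) and one of its neighbours are filled, the hook through that
   neighbour holds exactly one alpha and one beta; deleting it moves the
   third-diagonal box next to the diagonal, so the hook through it also holds
   one alpha and one beta.  Hence wt(S) = (alpha beta)^2 wt(U) for a tableau U
   of size n - 2.  Conversely, inserting two such hooks into U at
   q = floor((n-2)/2) * ceil((n-2)/2) pairs of positions, told apart by the
   diagonal, gives q distinct tableaux of weight wt(S), and inserting
   two bare diagonal boxes gives tableaux of weights wt(S) a^2 and wt(S) b^2.
   So Z_n >= wt(S) max(1, q, a^2, b^2), and (n + a + b)^2 <= 3 (n^2 + a^2 + b^2)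
   with n^2 <= 16 q + 9 gives P(S) <= 81 / (n + a + b)^2. *)

(* Hook coordinates: for s <= t < N, [h s t] is the box in row s + 1 and
   column N - t of a tableau of size N.  The main diagonal is s = t, boxes
   above (s, t) have the same t, and boxes to its left have larger t. *)
Definition hfill := nat -> nat -> option bool.

Definition is_htableau (N : nat) (h : hfill) : Prop :=
  forall s t, s <= t -> t < N ->
    [/\ s = t -> h s s != None,
        h s t = Some true -> forall s', s' < s -> h s' t = None &
        h s t = Some false -> forall t', t < t' -> t' < N -> h s t' = None].

Definition del_hook (h : hfill) p : hfill := fun s t => h (bump p s) (bump p t).

Definition hook_shape p (c v hb : bool) s t : option bool :=
  if s == p then (if t == p then Some c else if hb && (t == p.+1) then Some false else None)
  else if t == p then (if v && (s.+1 == p) then Some true else None) else None.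

Definition ins_hook (h : hfill) p c v hb : hfill := fun s t =>
  if (s == p) || (t == p) then hook_shape p c v hb s t else h (unbump p s) (unbump p t).

Definition has_hook N (h : hfill) p c v hb := forall s t, s <= t -> t < N.+1 ->
  (s == p) || (t == p) -> h s t = hook_shape p c v hb s t.

Lemma htableau_del_hook N h p : is_htableau N.+1 h -> is_htableau N (del_hook h p).
Proof.
move=> Th s t st tN; rewrite /del_hook.
have [D A B] := Th (bump p s) (bump p t) ltac:(rewrite /bump; lia) ltac:(rewrite /bump; lia).
split.
- by move=> e; subst; apply: D.
- by move=> H s' s's; apply: A => //; rewrite /bump; lia.
- by move=> H t' tt' t'N; apply: B => //; rewrite /bump; lia.
Qed.

Lemma del_ins_hook h p c v hb s t : del_hook (ins_hook h p c v hb) p s t = h s t.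
Proof. by rewrite /del_hook /ins_hook -!(eq_sym p) !(negbTE (neq_bump p _)) !bumpK. Qed.

Lemma htableau_ins_hook N h p (c v hb : bool) : is_htableau N h -> p <= N ->
  (v -> [/\ c = false, 0 < p & h p.-1 p.-1 = Some true]) ->
  (hb -> [/\ c = true, p < N & h p p = Some false]) ->
  is_htableau N.+1 (ins_hook h p c v hb).
Proof.
move=> Th pN Hv Hh s t st tN; rewrite /ins_hook /hook_shape /unbump.
case: (eqVneq s p) => [->|sp]; case: (eqVneq t p) => [->|tp] /=.
- split => //.
  + move=> cT s' s'p; rewrite (ltn_eqF s'p) /=.
    by case: v Hv => // /(_ isT) [cF _ _]; move: cT; rewrite cF.
  + move=> cF t' pt' t'N; rewrite (gtn_eqF pt') /=.
    by case: hb Hh => // /(_ isT) [cT _ _]; move: cF; rewrite cT.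
- split => //.
  + by case: ifP.
  + case: ifP => // /andP [_ /eqP tE] _ t' tt' t'N.
    have -> : (t' == p) = false by lia.
    have -> : (t' == p.+1) = false by lia.
    by rewrite andbF.
- split => //.
  + by move=> e; subst; rewrite eqxx in sp.
  + case: ifP => // /andP [_ /eqP sE] _ s' s's.
    have -> : (s' == p) = false by lia.
    have -> : (s'.+1 == p) = false by lia.
    by rewrite andbF.
  + by case: ifP.
- have [D A B] := Th (s - (p < s)) (t - (p < t)) ltac:(lia) ltac:(lia).
  split.
  + by move=> e; subst; exact: D.
  + move=> H s' s's; case: (eqVneq s' p) => [Es'|s'p] /=; last by apply: A => //; lia.
    subst s'; case: ifP => // /andP [hbT /eqP tE].
    have [_ _ Hpp] := Hh hbT.
    have e1 : s - (p < s) = p by lia.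
    have e2 : t - (p < t) = p by lia.
    by move: H; rewrite e1 e2 Hpp.
  + move=> H t' tt' t'N; case: (eqVneq t' p) => [Et'|t'p] /=; last by apply: B => //; lia.
    subst t'; case: ifP => // /andP [vT /eqP sE].
    have [_ p0 Hpp] := Hv vT.
    have e1 : s - (p < s) = p.-1 by lia.
    have e2 : t - (p < t) = p.-1 by lia.
    by move: H; rewrite e1 e2 Hpp.
Qed.

Definition count_sym (b : bool) N (h : hfill) : nat :=
  \sum_(s < N) \sum_(t < N) ((s <= t) && (h s t == Some b)).

Definition hook_count (b c v hb : bool) : nat := (c == b) + (hb && ~~ b) + (v && b).

Lemma hook_count_balanced b v : hook_count b (~~ v) v (~~ v) = 1.
Proof. by case: b; case: v. Qed.

Lemma count_sym_ext b N (h1 h2 : hfill) : h1 =2 h2 -> count_sym b N h1 = count_sym b N h2.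
Proof. by move=> E; apply: eq_bigr => s _; apply: eq_bigr => t _; rewrite E. Qed.

Lemma big_ord_split_at N p (pN : p < N.+1) (F : 'I_N.+1 -> nat) :
  \sum_(t < N.+1) F t = F (Ordinal pN) + \sum_(t < N) F (lift (Ordinal pN) t).
Proof. by rewrite (bigD1_ord (Ordinal pN)). Qed.

Lemma count_sym_del_hook b N h p : p <= N ->
  count_sym b N.+1 h = count_sym b N (del_hook h p)
    + ((h p p == Some b)
       + \sum_(t < N) ((p <= bump p t) && (h p (bump p t) == Some b))
       + \sum_(s < N) ((bump p s <= p) && (h (bump p s) p == Some b))).
Proof.
move=> pN; have pN1 : p < N.+1 by [].
rewrite /count_sym (big_ord_split_at pN1) /= (big_ord_split_at pN1) /= leqnn /=.
rewrite [RHS]addnCA; congr (_ + _); rewrite addnC -big_split /=.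
apply: eq_bigr => i _; rewrite (big_ord_split_at pN1) /=; congr (_ + _).
by apply: eq_bigr => j _; rewrite leq_bump2.
Qed.

Lemma sum_ord_and_eq N p (P : bool) : \sum_(t < N) (P && (t == p :> nat)) = P && (p < N).
Proof.
elim: N => [|N IH]; first by rewrite big_ord0 andbF.
by rewrite big_ord_recr /= {}IH; case: P; rewrite /= ?addn0; lia.
Qed.

Section HookCount.
Variables (b : bool) (N : nat) (h : hfill) (p : nat) (c v hb : bool).
Hypothesis hook_h : has_hook N h p c v hb.

Lemma has_hook_row_count : (hb -> p < N) ->
  \sum_(t < N) ((p <= bump p t) && (h p (bump p t) == Some b)) = hb && ~~ b.
Proof.
move=> Hb; have -> : nat_of_bool (hb && ~~ b) = \sum_(t < N) ((hb && ~~ b) && (t == p :> nat)).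
  by rewrite sum_ord_and_eq; case: hb Hb => // /(_ isT) ->; rewrite andbT.
apply: eq_bigr => t _; have tN := ltn_ord t.
case: (leqP p (bump p t)) => pt /=; last first.
  by rewrite (_ : (t == p :> nat) = false) ?andbF //; rewrite /bump in pt; lia.
rewrite hook_h ?eqxx //= /hook_shape ?eqxx; last by rewrite /bump; lia.
rewrite -(eq_sym p) (negbTE (neq_bump p t)).
have -> : (bump p t == p.+1) = (t == p :> nat) by rewrite /bump; lia.
by case: hb {Hb}; case: b; case: (t == p :> nat).
Qed.

Lemma has_hook_column_count : p <= N -> (v -> 0 < p) ->
  \sum_(s < N) ((bump p s <= p) && (h (bump p s) p == Some b)) = v && b.
Proof.
move=> pN Hv; have -> : nat_of_bool (v && b) = \sum_(s < N) ((v && b) && (s == p.-1 :> nat)).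
  by rewrite sum_ord_and_eq; case: v Hv => // /(_ isT) p0; rewrite (_ : p.-1 < N) ?andbT //; lia.
apply: eq_bigr => s _; have sN := ltn_ord s.
case: (leqP (bump p s) p) => ps /=; last first.
  case: v Hv => [/(_ isT) p0|_] //=.
  by rewrite (_ : (s == p.-1 :> nat) = false) ?andbF //; rewrite /bump in ps; lia.
rewrite hook_h ?eqxx ?orbT //= /hook_shape -(eq_sym p) (negbTE (neq_bump p s)) eqxx.
have -> : ((bump p s).+1 == p) = (s == p.-1 :> nat) by rewrite /bump in ps *; lia.
by case: v {Hv}; case: b; case: (s == p.-1 :> nat).
Qed.

Lemma count_sym_has_hook : p <= N -> (v -> 0 < p) -> (hb -> p < N) ->
  count_sym b N.+1 h = count_sym b N (del_hook h p) + hook_count b c v hb.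
Proof.
move=> pN Hv Hb.
rewrite (count_sym_del_hook b h pN) has_hook_row_count // has_hook_column_count //.
rewrite hook_h ?leqnn ?eqxx //= /hook_shape eqxx.
by have -> : (Some c == Some b) = (c == b) by apply/eqP/eqP => [[]|->].
Qed.

End HookCount.

Lemma count_sym_ins_hook b N h p (c v hb : bool) : p <= N -> (v -> 0 < p) -> (hb -> p < N) ->
  count_sym b N.+1 (ins_hook h p c v hb) = count_sym b N h + hook_count b c v hb.
Proof.
move=> pN Hv Hb.
have Hh : has_hook N (ins_hook h p c v hb) p c v hb by move=> s t _ _; rewrite /ins_hook => ->.
by rewrite (count_sym_has_hook b Hh pN Hv Hb) (count_sym_ext _ _ (del_ins_hook h p c v hb)).
Qed.

Lemma diag_filled N g s : is_htableau N g -> s < N -> g s s = Some true \/ g s s = Some false.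
Proof.
move=> Tg sN; have [D _ _] := Tg s s (leqnn s) sN.
by case: (g s s) (D erefl) => [[|]|] //= _; [left | right].
Qed.

(* A filled box next to the diagonal lies in a hook with exactly one alpha
   and one beta: the hook through its column if it is an alpha, the hook
   through its row if it is a beta. *)
Lemma adjacent_box_hook N g s x : is_htableau N.+1 g -> s < N -> g s s.+1 = Some x ->
  has_hook N g (s + x) (~~ x) x (~~ x).
Proof.
move=> Tg sN gx; have [_ A B] := Tg s s.+1 (leqnSn s) ltac:(lia).
case: x gx A B => gx A B /=.
- have [_ Ad Bd] := Tg s.+1 s.+1 (leqnn _) ltac:(lia).
  have dbeta : g s.+1 s.+1 = Some false.
    case: (@diag_filled _ _ s.+1 Tg ltac:(lia)) => // da.
    by move: gx; rewrite (Ad da s).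
  rewrite addn1 => s' t s't tN; rewrite /hook_shape.
  case: (eqVneq s' s.+1) s't => [->|/eqP s's] s't /=.
  + by case: (eqVneq t s.+1) => [->|/eqP ts] //= _; apply: Bd => //; lia.
  + move=> /eqP Et; subst t; rewrite eqxx.
    case: (eqVneq s' s) => [->|/eqP s's'] /=; first by rewrite eqxx.
    have -> : (s'.+1 == s.+1) = false by lia.
    by apply: A => //; lia.
- have [_ Ad Bd] := Tg s s (leqnn _) ltac:(lia).
  have dalpha : g s s = Some true.
    case: (@diag_filled _ _ s Tg ltac:(lia)) => // db.
    by move: gx; rewrite (Bd db s.+1).
  rewrite addn0 => s' t s't tN; rewrite /hook_shape.
  case: (eqVneq s' s) s't => [->|/eqP s's] s't /=.
  + case: (eqVneq t s) => [->|ts] //= _.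
    by case: (eqVneq t s.+1) => [->|/eqP ts'] //=; apply: B => //; lia.
  + move=> /eqP Et; subst t; rewrite eqxx.
    by apply: Ad => //; lia.
Qed.

Lemma count_sym_balanced_hook b N h p v : has_hook N h p (~~ v) v (~~ v) ->
  p <= N -> (v -> 0 < p) -> (~~ v -> p < N) ->
  count_sym b N.+1 h = (count_sym b N (del_hook h p)).+1.
Proof. by move=> Hh pN Hv Hb; rewrite (count_sym_has_hook b Hh) // hook_count_balanced addn1. Qed.

(* The box (m, m+2) of the third diagonal is what makes the two hooks fit:
   it blocks the wrong orientation of the hook through its filled neighbour,
   and once that hook is gone it becomes adjacent to the diagonal. *)
Lemma third_diagonal_hooks N h m : is_htableau N.+2 h -> m < N -> h m m.+2 != None ->
  h m m.+1 != None \/ h m.+1 m.+2 != None ->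
  exists2 U, is_htableau N U & forall b, count_sym b N.+2 h = (count_sym b N U).+2.
Proof.
move=> Th mN hX hA.
have [v Hv] : exists v, has_hook N.+1 h m.+1 (~~ v) v (~~ v).
  case: hA => [|]; [case E: (h m m.+1) => [[]|] // _ | case E: (h m.+1 m.+2) => [[]|] // _].
  - exists true; have := adjacent_box_hook Th (ltac:(lia) : m < N.+1) E.
    by rewrite addn1; apply.
  - have [_ _ B] := Th m m.+1 ltac:(lia) ltac:(lia).
    by rewrite (B E m.+2) in hX.
  - have [_ A _] := Th m.+1 m.+2 ltac:(lia) ltac:(lia).
    by rewrite (A E m) in hX.
  - exists false; have := adjacent_box_hook Th (ltac:(lia) : m.+1 < N.+1) E.
    by rewrite addn0; apply.
pose g := del_hook h m.+1.
have Tg : is_htableau N.+1 g := htableau_del_hook _ Th.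
have gX : g m m.+1 = h m m.+2 by rewrite /g /del_hook /bump; congr h; lia.
case E: (g m m.+1) => [x|]; last by rewrite -gX E in hX.
have Hg := adjacent_box_hook Tg mN E.
exists (del_hook g (m + x)) => [|b]; first exact: htableau_del_hook.
rewrite (count_sym_balanced_hook b Hv) ?(count_sym_balanced_hook b Hg) //.
all: by case: x {E Hg}; case: v {Hv} => /=; lia.
Qed.

Definition filling_of n (h : hfill) : filling n :=
  [ffun p : 'I_n * 'I_n => if p.1 + p.2 < n then h p.1 (n.-1 - p.2) else None].

Definition hfill_of n (S : filling n) : hfill := fun s t =>
  if insub s : option 'I_n is Some x then
    if insub (n.-1 - t) : option 'I_n is Some y then S (x, y) else None
  else None.

Lemma is_tableau_filling_of n h : is_htableau n h -> is_tableau (filling_of n h).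
Proof.
move=> Th; apply/forallP => -[i j] /=; rewrite !ffunE /=.
have iN := ltn_ord i; have jN := ltn_ord j.
apply/and4P; split.
- by apply/implyP => H; case: ifP => //; lia.
- apply/implyP; case: ifP => // ij /eqP H; apply/forallP => i'; apply/implyP => i'i.
  rewrite ffunE /=; case: ifP => // _.
  have [_ A _] := Th i (n.-1 - j) ltac:(lia) ltac:(lia).
  by rewrite (A H).
- apply/implyP; case: ifP => // ij /eqP H; apply/forallP => j'; apply/implyP => j'j.
  rewrite ffunE /=; case: ifP => // _.
  have [_ _ B] := Th i (n.-1 - j) ltac:(lia) ltac:(lia).
  by rewrite (B H) //; lia.
- apply/implyP => /eqP H; case: ifP => ij; last lia.
  have [D _ _] := Th i (n.-1 - j) ltac:(lia) ltac:(lia).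
  have -> : n.-1 - j = i by lia.
  by apply: D; lia.
Qed.

Lemma htableau_filling_of n h : is_tableau (filling_of n h) -> is_htableau n h.
Proof.
move=> T s t st tN; have sn : s < n by lia.
have jn : n.-1 - t < n by lia.
have /and4P [_ HA HB HD] := forallP T (Ordinal sn, Ordinal jn).
rewrite !ffunE /= in HA HB HD.
have e1 : (s + (n.-1 - t) < n) = true by lia.
have e2 : n.-1 - (n.-1 - t) = t by lia.
rewrite e1 e2 in HA HB HD; split.
- by move=> e; subst t; apply: (implyP HD); lia.
- move=> H s' s's; move: HA; rewrite H eqxx /= => /forallP /(_ (Ordinal (ltn_trans s's sn))).
  rewrite s's ffunE /=.
  have -> : s' + (n.-1 - t) < n by lia.
  by rewrite e2 => /eqP.
- move=> H t' tt' t'n; move: HB; rewrite H eqxx /=.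
  have j'n : n.-1 - t' < n by lia.
  move=> /forallP /(_ (Ordinal j'n)); rewrite ffunE /=.
  have -> : n.-1 - t' < n.-1 - t by lia.
  have -> : s + (n.-1 - t') < n by lia.
  have -> : n.-1 - (n.-1 - t') = t' by lia.
  by move=> /eqP.
Qed.

Lemma hfill_ofK n (S : filling n) : is_tableau S -> filling_of n (hfill_of S) = S.
Proof.
move=> T; apply/ffunP => -[i j]; rewrite ffunE /=.
case: ifP => ij; last first.
  have /and4P [H _ _ _] := forallP T (i, j).
  by apply/esym/eqP; apply: (implyP H) => /=; lia.
rewrite /hfill_of valK.
have -> : n.-1 - (n.-1 - j) = j by have := ltn_ord j; lia.
by rewrite valK.
Qed.

Lemma htableau_hfill_of n (S : filling n) : is_tableau S -> is_htableau n (hfill_of S).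
Proof. by move=> T; apply: htableau_filling_of; rewrite hfill_ofK. Qed.

Lemma cell_hfill_of n (S : filling n) i j : 0 < i -> 0 < j -> j <= n ->
  cell S i j = hfill_of S i.-1 (n - j).
Proof.
move=> i0 j0 jn; rewrite /cell /hfill_of i0 j0 /=.
have -> : n.-1 - (n - j) = j.-1 by lia.
by case: insub => [x|] //; case: insub.
Qed.

Lemma card_filling_of n h b : #|[set p | filling_of n h p == Some b]| = count_sym b n h.
Proof.
pose F i j := if filling_of n h (i, j) == Some b then 1 else 0.
rewrite -sum1dep_card big_mkcond /= (eq_bigr (fun p => F p.1 p.2)); last by case.
rewrite -(pair_bigA _ F) /=.
apply: eq_bigr => i _; rewrite (reindex_inj rev_ord_inj) /=; apply: eq_bigr => j _.
rewrite /F ffunE /=; have iN := ltn_ord i; have jN := ltn_ord j.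
case: (leqP i j) => ij.
- have -> : i + (n - j.+1) < n by lia.
  have -> : n.-1 - (n - j.+1) = j by lia.
  by case: (_ == _).
- by have -> : i + (n - j.+1) < n = false by lia.
Qed.

Lemma filling_of_diag n h1 h2 : filling_of n h1 = filling_of n h2 ->
  forall r, r < n -> h1 r r = h2 r r.
Proof.
move=> E r rn; have jn : n.-1 - r < n by lia.
have := congr1 (fun F : filling n => F (Ordinal rn, Ordinal jn)) E; rewrite /= !ffunE /=.
have -> : r + (n.-1 - r) < n by lia.
by have -> : n.-1 - (n.-1 - r) = r by lia.
Qed.

Definition diag_word (W : hfill) r : bool := W r r == Some true.

Definition ins_balanced_hook (W : hfill) q : hfill :=
  ins_hook W (q + diag_word W q) (~~ diag_word W q) (diag_word W q) (~~ diag_word W q).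

Lemma htableau_ins_balanced_hook M W q : is_htableau M W -> q < M ->
  is_htableau M.+1 (ins_balanced_hook W q).
Proof.
move=> TW qM; rewrite /ins_balanced_hook /diag_word; case: eqP => E.
- by apply: htableau_ins_hook; rewrite ?addn1.
- apply: htableau_ins_hook => //=; rewrite addn0; first exact: ltnW.
  move=> _; split => //.
  by case: (diag_filled TW qM).
Qed.

Lemma count_sym_ins_balanced_hook b M W q : q < M ->
  count_sym b M.+1 (ins_balanced_hook W q) = (count_sym b M W).+1.
Proof.
move=> qM; rewrite /ins_balanced_hook count_sym_ins_hook.
  by rewrite hook_count_balanced addn1.
all: by case: (diag_word W q) => /=; lia.
Qed.

Definition diag_expand (d : nat -> bool) q r : bool :=
  if r < q then d r else if r == q then true else if r == q.+1 then false else d r.-1.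

Lemma diag_word_ins_balanced_hook W q :
  diag_word (ins_balanced_hook W q) =1 diag_expand (diag_word W) q.
Proof.
move=> r; rewrite /ins_balanced_hook /diag_expand /diag_word /ins_hook orbb /hook_shape /unbump.
case Dq: (W q q == Some true) => /=; rewrite ?addn1 ?addn0.
- case: (ltngtP r q) => [rq|qr|->].
  + have -> : (r == q.+1) = false by lia.
    have -> : (q.+1 < r) = false by lia.
    by rewrite subn0.
  + case: (eqVneq r q.+1) => [//|/eqP rq1].
    by have -> : r - (q.+1 < r) = r.-1 by lia.
  + have -> : (q == q.+1) = false by lia.
    have -> : (q.+1 < q) = false by lia.
    by rewrite subn0 Dq.
- case: (ltngtP r q) => [rq|qr|_] //=; first by rewrite subn0.
  by case: (eqVneq r q.+1) => [->|_]; rewrite subn1 ?Dq.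
Qed.

Section DiagExpand.
Variable d : nat -> bool.

Lemma diag_expand_lt q r : r < q -> diag_expand d q r = d r.
Proof. by rewrite /diag_expand => ->. Qed.

Lemma diag_expand_gt q r : q.+1 < r -> diag_expand d q r = d r.-1.
Proof.
move=> qr; rewrite /diag_expand.
have -> : (r < q) = false by lia.
have -> : (r == q) = false by lia.
by have -> : (r == q.+1) = false by lia.
Qed.

Lemma diag_expand_at q : diag_expand d q q = true.
Proof. by rewrite /diag_expand ltnn eqxx. Qed.

Lemma diag_expand_next q : diag_expand d q q.+1 = false.
Proof. by rewrite /diag_expand ltnNge leqnSn /= (gtn_eqF (ltnSn q)) eqxx. Qed.

(* Between the two expansion points the word must be constantly beta, which
   contradicts the alpha written at the second point. *)
Lemma diag_expand_ltn_neq q q' : q < q' ->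
  ~ (forall r, r <= q' -> diag_expand d q r = diag_expand d q' r).
Proof.
move=> qq' E.
have beta i : q.+1 + i <= q' -> diag_expand d q' (q.+1 + i) = false.
  elim: i => [|i IH] Hi; first by rewrite addn0 -E ?diag_expand_next.
  have Hlt : q.+1 + i < q' by lia.
  have Hgt : q.+1 < (q.+1 + i).+1 by lia.
  by rewrite addnS -E // (diag_expand_gt Hgt) /= -(IH (ltnW Hlt)) (diag_expand_lt Hlt).
by move: (beta (q' - q.+1) ltac:(lia)); rewrite subnKC // diag_expand_at.
Qed.

Lemma diag_expand_inj q q' L : q < L -> q' < L ->
  (forall r, r < L -> diag_expand d q r = diag_expand d q' r) -> q = q'.
Proof.
move=> qL q'L E; case: (ltngtP q q') => // [qq'|q'q].
- by case: (diag_expand_ltn_neq qq') => r rq'; apply: E; lia.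
- by case: (diag_expand_ltn_neq q'q) => r rq; symmetry; apply: E; lia.
Qed.

End DiagExpand.

Definition two_hooks (U : hfill) K i j : hfill :=
  ins_balanced_hook (ins_balanced_hook U i) (K + j).+1.

Lemma htableau_two_hooks N U K i j : is_htableau N U -> i <= K -> K + j < N ->
  is_htableau N.+2 (two_hooks U K i j).
Proof.
move=> TU iK jN; apply: htableau_ins_balanced_hook; last lia.
by apply: htableau_ins_balanced_hook => //; lia.
Qed.

Lemma count_sym_two_hooks b N U K i j : i <= K -> K + j < N ->
  count_sym b N.+2 (two_hooks U K i j) = (count_sym b N U).+2.
Proof. by move=> iK jN; rewrite !count_sym_ins_balanced_hook //; lia. Qed.

Lemma two_hooks_inj N U K i j i' j' : i < K -> i' < K -> K + j < N -> K + j' < N ->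
  filling_of N.+2 (two_hooks U K i j) = filling_of N.+2 (two_hooks U K i' j') ->
  i = i' /\ j = j'.
Proof.
move=> iK i'K jN j'N /filling_of_diag E.
have Ed r : r < N.+2 ->
    diag_expand (diag_word (ins_balanced_hook U i)) (K + j).+1 r =
    diag_expand (diag_word (ins_balanced_hook U i')) (K + j').+1 r.
  move=> rN; rewrite -!diag_word_ins_balanced_hook /diag_word.
  by move: (E r rN); rewrite /two_hooks => ->.
have ii' : i = i'.
  apply: (@diag_expand_inj (diag_word U) i i' K.+1); try lia; move=> r rK.
  rewrite -!diag_word_ins_balanced_hook.
  by move: (Ed r ltac:(lia)); rewrite !diag_expand_lt //; lia.
subst i'; split => //.
suff : (K + j).+1 = (K + j').+1 by lia.
by apply: (diag_expand_inj _ _ Ed); lia.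
Qed.

Lemma sqr_le_half_products N : 0 < N -> N.+2 ^ 2 <= 16 * (N./2 * (N - N./2)) + 9.
Proof.
move=> N0; have := odd_double_half N.
by case: (odd N) => /= E; rewrite -E; set K := N./2; nia.
Qed.

Local Open Scope ring_scope.

Lemma div_le_81_div_sqr (F : realFieldType) (w Z q x a b : F) :
  0 < w -> 0 < x -> 0 <= a -> 0 <= b -> x ^+ 2 <= 16 * q + 9 ->
  w <= Z -> q * w <= Z -> w * a ^+ 2 <= Z -> w * b ^+ 2 <= Z ->
  w / Z <= 81 / (x + a + b) ^+ 2.
Proof.
move=> w0 x0 a0 b0 hx Zw Zq Za Zb.
have Z0 : 0 < Z by apply: lt_le_trans Zw.
have s0 : 0 < (x + a + b) ^+ 2 by rewrite exprn_gt0 // ltr_wpDr // ltr_wpDr.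
rewrite ler_pdivrMr // mulrAC ler_pdivlMr //.
have sqr3 : (x + a + b) ^+ 2 <= 3 * (x ^+ 2 + a ^+ 2 + b ^+ 2).
  rewrite -subr_ge0 (_ : _ - _ = (x - a) ^+ 2 + (x - b) ^+ 2 + (a - b) ^+ 2); last by ring.
  by rewrite !addr_ge0 // sqr_ge0.
have := ler_wpM2l (ltW w0) sqr3; have := ler_wpM2l (ltW w0) hx.
nra.
Qed.

Section Partition.
Variables (R : realType) (alpha beta : R).
Hypotheses (alpha_gt0 : 0 < alpha) (beta_gt0 : 0 < beta).

Definition partition n := \sum_(T : filling n | is_tableau T) wt alpha beta T.

Lemma wt_filling_of n h :
  wt alpha beta (filling_of n h) = alpha ^+ count_sym true n h * beta ^+ count_sym false n h.
Proof. by rewrite /wt !card_filling_of. Qed.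

Lemma wt_ge0 n (T : filling n) : 0 <= wt alpha beta T.
Proof. by rewrite /wt mulr_ge0 // exprn_ge0 // ltW. Qed.

Lemma wt_le_partition n (T : filling n) : is_tableau T -> wt alpha beta T <= partition n.
Proof. by move=> HT; rewrite /partition (bigD1 T) //= lerDl sumr_ge0 // => *; apply: wt_ge0. Qed.

Lemma sum_wt_le_partition n (I : finType) (F : I -> filling n) :
  injective F -> (forall x, is_tableau (F x)) -> \sum_x wt alpha beta (F x) <= partition n.
Proof.
move=> Fi HF; rewrite -(big_imset (fun T => wt alpha beta T) (in2W Fi)) /= /partition.
rewrite [X in _ <= X](bigID (mem (F @: I))) /= -[X in X <= _]addr0.
apply: lerD; last by apply: sumr_ge0 => *; apply: wt_ge0.
rewrite le_eqVlt; apply/orP; left; apply/eqP/eq_bigl => T.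
apply/idP/andP => [H|[]//]; split => //.
by case/imsetP: H => x _ ->.
Qed.

Lemma two_hooks_le_partition N U : is_htableau N U ->
  (N./2 * (N - N./2))%:R * (alpha ^+ (count_sym true N U).+2 * beta ^+ (count_sym false N U).+2)
  <= partition N.+2.
Proof.
move=> TU; set K := N./2; have KN : (K <= N)%N by rewrite /K; lia.
pose F (x : 'I_K * 'I_(N - K)) := filling_of N.+2 (two_hooks U K x.1 x.2).
have Fi : injective F.
  move=> [i j] [i' j'] E.
  have jN : (K + j < N)%N by have := ltn_ord j; lia.
  have j'N : (K + j' < N)%N by have := ltn_ord j'; lia.
  have [ii' jj'] := two_hooks_inj (ltn_ord i) (ltn_ord i') jN j'N E.
  by rewrite (val_inj ii') (val_inj jj').
have HF x : is_tableau (F x).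
  case: x => i j; have := ltn_ord i; have := ltn_ord j => /= jK iK.
  by apply/is_tableau_filling_of/htableau_two_hooks => //=; lia.
apply: le_trans (sum_wt_le_partition Fi HF); rewrite le_eqVlt; apply/orP; left; apply/eqP.
set w := alpha ^+ _ * beta ^+ _.
rewrite (eq_bigr (fun=> w)); first by rewrite sumr_const card_prod !card_ord mulr_natl.
move=> [i j] _; have iK := ltn_ord i; have jK := ltn_ord j.
by rewrite /F wt_filling_of !count_sym_two_hooks //=; lia.
Qed.

Lemma diagonal_hooks_le_partition N U (c : bool) : is_htableau N U ->
  alpha ^+ (count_sym true N U + 2 * c) * beta ^+ (count_sym false N U + 2 * ~~ c)
  <= partition N.+2.
Proof.
move=> TU.
have TT : is_htableau N.+2 (ins_hook (ins_hook U 0 c false false) 0 c false false).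
  by apply: htableau_ins_hook => //; apply: htableau_ins_hook.
have := wt_le_partition (is_tableau_filling_of TT); clear TT.
by rewrite wt_filling_of !count_sym_ins_hook // /hook_count; case: c; rewrite /= !addn0 -!addnA.
Qed.

Lemma third_diagonal_weight_ratio N U : (0 < N)%N -> is_htableau N U ->
  alpha ^+ (count_sym true N U).+2 * beta ^+ (count_sym false N U).+2 / partition N.+2
  <= 81 / (N.+2%:R + alpha^-1 + beta^-1) ^+ 2.
Proof.
move=> N0 TU; set w := alpha ^+ _ * beta ^+ _.
have w0 : 0 < w by rewrite mulr_gt0 ?exprn_gt0.
have diag_hook (c : bool) : w * (if c then beta^-1 else alpha^-1) ^+ 2 <= partition N.+2.
  apply: le_trans (diagonal_hooks_le_partition c TU); rewrite le_eqVlt; apply/orP; left.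
  apply/eqP; rewrite /w; case: c; rewrite /= ?muln1 ?muln0 ?addn0 ?addn2 !exprS;
  by field; exact: lt0r_neq0.
apply: (div_le_81_div_sqr (q := (N./2 * (N - N./2))%:R) w0).
- by rewrite ltr0n.
- by rewrite invr_ge0 ltW.
- by rewrite invr_ge0 ltW.
- by move: (sqr_le_half_products N0); rewrite -(ler_nat R) natrD natrM natrX.
- have := wt_le_partition (is_tableau_filling_of (htableau_two_hooks TU (leqnn 0) N0)).
  by rewrite wt_filling_of !count_sym_two_hooks.
- exact: two_hooks_le_partition.
- exact: (diag_hook false).
- exact: (diag_hook true).
Qed.

End Partition.

Theorem lemma4p1 (R : realType) :
  exists C : R, forall (alpha beta : R) (n k : nat) (S : filling n),
    0 < alpha -> 0 < beta -> (3 <= n)%N -> (1 <= k)%N -> (k <= n - 2)%N ->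
    is_tableau S ->
    cell S (n - k - 1) k != None ->
    (cell S (n - k - 1) k.+1 != None \/ cell S (n - k) k != None) ->
    prob alpha beta S <= C / (n%:R + alpha^-1 + beta^-1) ^+ 2.
Proof.
exists 81 => alpha beta n k S a0 b0 n3 k1 kn TS.
case: n S TS n3 kn => [|[|N]] // S TS _ kN.
set m := (N - k)%N.
have [eX eR eD] : [/\ cell S (N.+2 - k - 1) k = hfill_of S m m.+2,
    cell S (N.+2 - k - 1) k.+1 = hfill_of S m m.+1
  & cell S (N.+2 - k) k = hfill_of S m.+1 m.+2]%N.
  by split; rewrite cell_hfill_of; try congr hfill_of; lia.
rewrite eX eR eD => hX hA.
have mN : (m < N)%N by rewrite /m; lia.
have [U TU cU] := third_diagonal_hooks (htableau_hfill_of TS) mN hX hA.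
rewrite /prob -/(partition alpha beta N.+2) -(hfill_ofK TS) wt_filling_of !cU.
by apply: third_diagonal_weight_ratio => //; lia.
Qed.
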